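(* Let $\phi_1,\ldots,\phi_n \vdash \psi_0$ be a sequent of $NOM$ ($n\ge 0$). The following are equivalent: (1) $\phi_1,\ldots,\phi_n\vdash\psi_0$ is derivable in $NOM$ extended by the exchange rule (from $\Gamma,\phi,\psi,\Delta\vdash\chi$ infer $\Gamma,\psi,\phi,\Delta\vdash\chi$, for arbitrary finite sequences $\Gamma,\Delta$ and formulas $\phi,\psi,\chi$); (2) $\phi_1,\ldots,\phi_n\vdash\psi_0$ is derivable in Gentzen's classical sequent calculus $LK$ (the system $G1$ of Kleene's Introduction to Metamathematics); (3) the formula $(\phi_1\wedge\cdots\wedge\phi_n)\rightarrow\psi_0$ is derivable in Kleene's Hilbert-style system $H$ for classical logic, i.e. is a classical tautology. When $n=0$, $(\phi_1\wedge\cdots\wedge\phi_n)\rightarrow\psi_0$ means $\psi_0$.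
   Context: The propositional deductive system $NOM$: formulas are built from propositional letters using the binary connectives $\wedge$, $\rightarrow$ and the unary connective $\neg$. A sequent is an expression $\phi_1,\ldots,\phi_n \vdash \psi$ with $n\ge 0$, whose antecedent is a finite sequence (order matters, repetitions allowed) of formulas. Below $\Gamma$ denotes a finite, possibly empty, sequence of formulas, $\phi,\psi,\chi$ formulas, and commas denote concatenation. A sequent is derivable in $NOM$ if it can be obtained with the following rules (premises $\Rightarrow$ conclusion): (assumption) $\Gamma,\phi\vdash\phi$, no premises; (cut) $\Gamma\vdash\phi$ and $\Gamma,\phi\vdash\psi$ $\Rightarrow$ $\Gamma\vdash\psi$; (paste) $\Gamma\vdash\phi$ and $\Gamma\vdash\psi$ $\Rightarrow$ $\Gamma,\phi\vdash\psi$; (compatible exchange) $\Gamma,\phi,\psi\vdash\phi$ and $\Gamma,\phi,\psi\vdash\chi$ and $\Gamma,\psi,\phi\vdash\psi$ $\Rightarrow$ $\Gamma,\psi,\phi\vdash\chi$; ($\wedge$-introduction) $\Gamma\vdash\phi$ and $\Gamma\vdash\psi$ $\Rightarrow$ $\Gamma\vdash\phi\wedge\psi$; ($\wedge$-elimination) $\Gamma\vdash\phi\wedge\psi$ $\Rightarrow$ $\Gamma\vdash\phi$, and $\Gamma\vdash\phi\wedge\psi$ $\Rightarrow$ $\Gamma\vdash\psi$; ($\rightarrow$-introduction) $\Gamma,\phi\vdash\psi$ $\Rightarrow$ $\Gamma\vdash\phi\rightarrow\psi$; ($\rightarrow$-elimination) $\Gamma\vdash\phi\rightarrow\psi$ $\Rightarrow$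 $\Gamma,\phi\vdash\psi$; (excluded middle) $\Gamma,\phi\vdash\psi$ and $\Gamma,\neg\phi\vdash\psi$ $\Rightarrow$ $\Gamma\vdash\psi$; (deductive explosion) $\Gamma\vdash\neg\phi$ $\Rightarrow$ $\Gamma,\phi\vdash\psi$. *)

From Stdlib Require Import List.
Import ListNotations.

Inductive form : Type :=
| Var  : nat -> form
| And  : form -> form -> form
| Imp  : form -> form -> form
| Neg  : form -> form.

Inductive NOMx (exch : bool) : list form -> form -> Prop :=
| nom_assum : forall G p, NOMx exch (G ++ [p]) p
| nom_cut : forall G p q,
    NOMx exch G p -> NOMx exch (G ++ [p]) q -> NOMx exch G q
| nom_paste : forall G p q,
    NOMx exch G p -> NOMx exch G q -> NOMx exch (G ++ [p]) q
| nom_cexch : forall G p q c,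
    NOMx exch (G ++ [p; q]) p ->
    NOMx exch (G ++ [p; q]) c ->
    NOMx exch (G ++ [q; p]) q ->
    NOMx exch (G ++ [q; p]) c
| nom_andI : forall G p q,
    NOMx exch G p -> NOMx exch G q -> NOMx exch G (And p q)
| nom_andE1 : forall G p q, NOMx exch G (And p q) -> NOMx exch G p
| nom_andE2 : forall G p q, NOMx exch G (And p q) -> NOMx exch G q
| nom_impI : forall G p q, NOMx exch (G ++ [p]) q -> NOMx exch G (Imp p q)
| nom_impE : forall G p q, NOMx exch G (Imp p q) -> NOMx exch (G ++ [p]) q
| nom_em : forall G p q,
    NOMx exch (G ++ [p]) q -> NOMx exch (G ++ [Neg p]) q -> NOMx exch G q
| nom_explo : forall G p q, NOMx exch G (Neg p) -> NOMx exch (G ++ [p]) q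
| nom_exch : exch = true -> forall G D p q c,
    NOMx exch (G ++ p :: q :: D) c -> NOMx exch (G ++ q :: p :: D) c.

Definition NOM := NOMx false.
Definition NOM_exch := NOMx true.

(* Gentzen's LK in the form of Kleene's G1 (Introduction to Metamathematics,
   Sec. 77), propositional rules for the connectives /\, ->, ~ only.
   [G1 Gamma Theta] : the sequent Gamma -> Theta is derivable. *)
Inductive G1 : list form -> list form -> Prop :=
| g1_ax : forall C, G1 [C] [C]
| g1_thinL : forall D G T, G1 G T -> G1 (D :: G) T
| g1_thinR : forall D G T, G1 G T -> G1 G (T ++ [D])
| g1_contrL : forall D G T, G1 (D :: D :: G) T -> G1 (D :: G) T
| g1_contrR : forall D G T, G1 G (T ++ [D; D]) -> G1 G (T ++ [D])
| g1_interL : forall Dl C D G T,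
    G1 (Dl ++ D :: C :: G) T -> G1 (Dl ++ C :: D :: G) T
| g1_interR : forall G T C D L,
    G1 G (T ++ C :: D :: L) -> G1 G (T ++ D :: C :: L)
| g1_cut : forall Dl L C G T,
    G1 Dl (L ++ [C]) -> G1 (C :: G) T -> G1 (Dl ++ G) (L ++ T)
| g1_impR : forall A B G T, G1 (A :: G) (T ++ [B]) -> G1 G (T ++ [Imp A B])
| g1_impL : forall A B Dl L G T,
    G1 Dl (L ++ [A]) -> G1 (B :: G) T -> G1 (Imp A B :: Dl ++ G) (L ++ T)
| g1_andR : forall A B G T,
    G1 G (T ++ [A]) -> G1 G (T ++ [B]) -> G1 G (T ++ [And A B])
| g1_andL1 : forall A B G T, G1 (A :: G) T -> G1 (And A B :: G) T
| g1_andL2 : forall A B G T, G1 (B :: G) T -> G1 (And A B :: G) T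
| g1_negR : forall A G T, G1 (A :: G) T -> G1 G (T ++ [Neg A])
| g1_negL : forall A G T, G1 G (T ++ [A]) -> G1 (Neg A :: G) T.

(* Kleene's Hilbert-style system H (IM Sec. 19), propositional postulates
   for /\, ->, ~ (axiom schemata 1a, 1b, 3, 4a, 4b, 7, 8 and modus ponens). *)
Inductive H : form -> Prop :=
| h1a : forall A B, H (Imp A (Imp B A))
| h1b : forall A B C,
    H (Imp (Imp A B) (Imp (Imp A (Imp B C)) (Imp A C)))
| hmp : forall A B, H A -> H (Imp A B) -> H B
| h3 : forall A B, H (Imp A (Imp B (And A B)))
| h4a : forall A B, H (Imp (And A B) A)
| h4b : forall A B, H (Imp (And A B) B)
| h7 : forall A B, H (Imp (Imp A B) (Imp (Imp A (Neg B)) (Neg A)))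
| h8 : forall A, H (Imp (Neg (Neg A)) A).

Fixpoint bigAnd (l : list form) : option form :=
  match l with
  | [] => None
  | [p] => Some p
  | p :: l' => match bigAnd l' with
               | None => Some p
               | Some q => Some (And p q)
               end
  end.

Definition seq_formula (l : list form) (psi : form) : form :=
  match bigAnd l with
  | None => psi
  | Some c => Imp c psi
  end.

From Stdlib Require Import List Permutation.
Import ListNotations.

(* With exchange, NOM derives weakening and contraction, so its contexts behave
   as sets.  A G1 sequent  Gamma -> Theta  is then read as the inconsistency of
   Gamma, ~Theta  in NOM with exchange, and every G1 rule becomes a short
   classical argument there (by contradiction, double negation, explosion).
   Conversely, NOM rules are admissible for derivability in H from hypotheses
   (deduction theorem, excluded middle from schemata 7 and 8), and H
   derivations from hypotheses are replayed in G1.  The deduction theorem and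
   the conjunction schemata identify derivability from  phi_1, ..., phi_n  with
   derivability of  (phi_1 /\ ... /\ phi_n) -> psi.  *)

Ltac solve_incl :=
  try (let x := fresh in intros x); simpl; rewrite ?map_app, ?in_app_iff; simpl;
  rewrite ?map_app, ?in_app_iff; simpl; tauto.

Section StructuralRules.

Variable A : Type.
Variable S : list A -> Prop.

Hypothesis S_swap : forall G D p q, S (G ++ p :: q :: D) -> S (G ++ q :: p :: D).

Lemma closed_under_Permutation l l' : Permutation l l' -> S l -> S l'.
Proof.
  intros Hperm.
  enough (Hpre : forall G, S (G ++ l) -> S (G ++ l')) by exact (Hpre []).
  induction Hperm as [|x l l' _ IH|x y l|l l' l'' _ IH1 _ IH2]; intros G HS; auto.
  replace (G ++ x :: l') with ((G ++ [x]) ++ l') by now rewrite <- app_assoc.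
  apply IH. now rewrite <- app_assoc.
Qed.

Hypothesis S_weaken : forall a l, S l -> S (a :: l).
Hypothesis S_contract : forall a l, S (a :: a :: l) -> S (a :: l).

Lemma contract_member a l : In a l -> S (a :: l) -> S l.
Proof.
  intros Hin HS. apply in_split in Hin as (l1 & l2 & ->).
  apply (closed_under_Permutation (a :: l1 ++ l2)); [apply Permutation_middle|].
  apply S_contract, (closed_under_Permutation (a :: l1 ++ a :: l2)); auto.
  apply perm_skip, Permutation_sym, Permutation_middle.
Qed.

Lemma closed_under_incl l l' : incl l l' -> S l -> S l'.
Proof.
  intros Hincl HS.
  assert (Hweak : S (l ++ l')).
  { apply (closed_under_Permutation (l' ++ l)); [apply Permutation_app_comm|].
    clear Hincl; induction l'; simpl; auto. }
  clear HS. induction l as [|a l IH]; auto.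
  apply IH; [intros x Hx; apply Hincl; now right|].
  apply (contract_member a); [|exact Hweak].
  apply in_or_app; right; apply Hincl; now left.
Qed.

End StructuralRules.

Inductive Hderiv (D : list form) : form -> Prop :=
| hd_hyp : forall A, In A D -> Hderiv D A
| hd_ax : forall A, H A -> Hderiv D A
| hd_mp : forall A B, Hderiv D A -> Hderiv D (Imp A B) -> Hderiv D B.

Lemma hd_subst D D' A :
  (forall B, In B D -> Hderiv D' B) -> Hderiv D A -> Hderiv D' A.
Proof.
  intros HD HA.
  induction HA as [B Hin|B Hax|B C _ IH1 _ IH2]; auto using hd_ax.
  exact (hd_mp _ _ _ IH1 IH2).
Qed.

Lemma hd_weaken D D' A : incl D D' -> Hderiv D A -> Hderiv D' A.
Proof. intros Hincl; apply hd_subst; intros B HB; apply hd_hyp, Hincl, HB. Qed.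

Lemma hd_nil A : Hderiv [] A <-> H A.
Proof.
  split; [|apply hd_ax].
  intros HA; induction HA as [B []|B Hax|B C _ IH1 _ IH2]; auto.
  exact (hmp _ _ IH1 IH2).
Qed.

Lemma H_imp_refl A : H (Imp A A).
Proof.
  apply (hmp _ _ (h1a A (Imp A A))).
  exact (hmp _ _ (h1a A A) (h1b A (Imp A A) A)).
Qed.

Lemma hd_deduction D A B : Hderiv (A :: D) B -> Hderiv D (Imp A B).
Proof.
  intros HB; remember (A :: D) as D0 eqn:E.
  induction HB as [B Hin|B Hax|B C _ IH1 _ IH2]; subst.
  - destruct Hin as [<-|Hin]; [apply hd_ax, H_imp_refl|].
    exact (hd_mp _ _ _ (hd_hyp _ _ Hin) (hd_ax _ _ (h1a B A))).
  - exact (hd_mp _ _ _ (hd_ax _ _ Hax) (hd_ax _ _ (h1a B A))).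
  - exact (hd_mp _ _ _ IH2 (hd_mp _ _ _ IH1 (hd_ax _ _ (h1b _ _ _)))).
Qed.

Lemma hd_cut D A B : Hderiv D A -> Hderiv (A :: D) B -> Hderiv D B.
Proof. intros HA HB; exact (hd_mp _ _ _ HA (hd_deduction _ _ _ HB)). Qed.

Lemma hd_explosion D A B : Hderiv D A -> Hderiv D (Neg A) -> Hderiv D B.
Proof.
  intros HA HnA.
  (* schema 7 with premises ~B -> A and ~B -> ~A gives ~~B *)
  apply (hd_mp _ (Neg (Neg B))); [|apply hd_ax, h8].
  apply (hd_mp _ (Imp (Neg B) (Neg A))); [exact (hd_mp _ _ _ HnA (hd_ax _ _ (h1a _ _)))|].
  apply (hd_mp _ (Imp (Neg B) A)); [exact (hd_mp _ _ _ HA (hd_ax _ _ (h1a _ _)))|].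
  apply hd_ax, h7.
Qed.

Lemma hd_consequentia_mirabilis D A : Hderiv (Neg A :: D) A -> Hderiv D A.
Proof.
  intros HA. apply hd_deduction in HA.
  apply (hd_mp _ (Neg (Neg A))); [|apply hd_ax, h8].
  apply (hd_mp _ (Imp (Neg A) (Neg A))); [apply hd_ax, H_imp_refl|].
  exact (hd_mp _ _ _ HA (hd_ax _ _ (h7 _ _))).
Qed.

Lemma hd_excluded_middle D A B :
  Hderiv (A :: D) B -> Hderiv (Neg A :: D) B -> Hderiv D B.
Proof.
  intros HA HnA. apply hd_consequentia_mirabilis.
  assert (Hcontra : Hderiv (Neg B :: D) (Neg A)).
  { apply (hd_mp _ (Imp A (Neg B))).
    - apply (hd_mp _ (Neg B)); [apply hd_hyp; now left|apply hd_ax, h1a].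
    - apply (hd_mp _ (Imp A B)); [|apply hd_ax, h7].
      apply (hd_weaken D); [solve_incl|]. exact (hd_deduction _ _ _ HA). }
  apply (hd_cut _ _ _ Hcontra). revert HnA; apply hd_weaken; solve_incl.
Qed.

Lemma bigAnd_cons a l c : bigAnd l = Some c -> bigAnd (a :: l) = Some (And a c).
Proof.
  destruct l as [|b l]; [discriminate|]. intros E.
  change (bigAnd (a :: b :: l))
    with (match bigAnd (b :: l) with None => Some a | Some q => Some (And a q) end).
  now rewrite E.
Qed.

Lemma bigAnd_None l : bigAnd l = None -> l = [].
Proof.
  induction l as [|a l IH]; auto. destruct (bigAnd l) as [c|] eqn:E.
  - now rewrite (bigAnd_cons a l c E).
  - now rewrite (IH eq_refl).
Qed.

Lemma hd_bigAnd_intro l c : bigAnd l = Some c -> Hderiv l c.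
Proof.
  revert c; induction l as [|a l IH]; intros c Hc; [discriminate|].
  destruct (bigAnd l) as [q|] eqn:E.
  - rewrite (bigAnd_cons a l q E) in Hc; injection Hc as <-.
    apply (hd_mp _ q); [apply (hd_weaken l); [solve_incl|exact (IH q eq_refl)]|].
    apply (hd_mp _ a); [apply hd_hyp; now left|apply hd_ax, h3].
  - rewrite (bigAnd_None l E) in Hc |- *; injection Hc as <-.
    apply hd_hyp; now left.
Qed.

Lemma hd_bigAnd_elim l c : bigAnd l = Some c -> forall x, In x l -> Hderiv [c] x.
Proof.
  revert c; induction l as [|a l IH]; intros c Hc x Hx; [destruct Hx|].
  destruct (bigAnd l) as [q|] eqn:E.
  - rewrite (bigAnd_cons a l q E) in Hc; injection Hc as <-.
    destruct Hx as [<-|Hx].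
    + apply (hd_mp _ (And a q)); [apply hd_hyp; now left|apply hd_ax, h4a].
    + apply (hd_subst [q]); [|exact (IH q eq_refl x Hx)].
      intros y [<-|[]].
      apply (hd_mp _ (And a q)); [apply hd_hyp; now left|apply hd_ax, h4b].
  - rewrite (bigAnd_None l E) in Hc, Hx; injection Hc as <-.
    destruct Hx as [<-|[]]; apply hd_hyp; now left.
Qed.

Lemma hd_seq_formula l A : Hderiv l A <-> H (seq_formula l A).
Proof.
  unfold seq_formula. destruct (bigAnd l) as [c|] eqn:E.
  - split; intros HA.
    + apply hd_nil, hd_deduction, (hd_subst l); [apply hd_bigAnd_elim|]; assumption.
    + exact (hd_mp _ _ _ (hd_bigAnd_intro l c E) (hd_ax _ _ HA)).
  - rewrite (bigAnd_None l E). apply hd_nil.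
Qed.

Lemma nom_exch_hd G A : NOM_exch G A -> Hderiv G A.
Proof.
  induction 1 as [G p|G p q _ IH1 _ IH2|G p q _ IH1 _ IH2|G p q c _ _ _ IH _ _
                 |G p q _ IH1 _ IH2|G p q _ IH|G p q _ IH|G p q _ IH|G p q _ IH
                 |G p q _ IH1 _ IH2|G p q _ IH|_ G D p q c _ IH].
  - apply hd_hyp; solve_incl.
  - apply (hd_cut _ _ _ IH1); revert IH2; apply hd_weaken; solve_incl.
  - revert IH2; apply hd_weaken; solve_incl.
  - revert IH; apply hd_weaken; solve_incl.
  - exact (hd_mp _ _ _ IH2 (hd_mp _ _ _ IH1 (hd_ax _ _ (h3 p q)))).
  - exact (hd_mp _ _ _ IH (hd_ax _ _ (h4a p q))).
  - exact (hd_mp _ _ _ IH (hd_ax _ _ (h4b p q))).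
  - apply hd_deduction; revert IH; apply hd_weaken; solve_incl.
  - apply (hd_mp _ p); [apply hd_hyp; solve_incl|revert IH; apply hd_weaken; solve_incl].
  - apply (hd_excluded_middle _ p); [revert IH1|revert IH2]; apply hd_weaken; solve_incl.
  - apply (hd_explosion _ p); [apply hd_hyp; solve_incl|revert IH; apply hd_weaken; solve_incl].
  - revert IH; apply hd_weaken; solve_incl.
Qed.

Lemma nom_swap G D p q c :
  NOM_exch (G ++ p :: q :: D) c -> NOM_exch (G ++ q :: p :: D) c.
Proof. exact (nom_exch true eq_refl G D p q c). Qed.

Lemma nom_perm l l' c : Permutation l l' -> NOM_exch l c -> NOM_exch l' c.
Proof.
  intros Hperm; apply (closed_under_Permutation _ (fun l => NOM_exch l c)); auto.
  intros; apply nom_swap; assumption.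
Qed.

Lemma nom_weaken_last G p c : NOM_exch G c -> NOM_exch (G ++ [p]) c.
Proof.
  (* cut [G |- c] against [G, c |- p -> c]; the premise [G, c, p |- c] is an
     assumption only up to exchange *)
  intros Hc. apply nom_impE, (nom_cut _ _ _ _ Hc), nom_impI. rewrite <- app_assoc.
  apply (nom_swap G [] p c c). change [p; c] with ([p] ++ [c]).
  rewrite app_assoc. apply nom_assum.
Qed.

Lemma nom_weaken l l' c : incl l l' -> NOM_exch l c -> NOM_exch l' c.
Proof.
  apply (closed_under_incl _ (fun l => NOM_exch l c)).
  - intros; apply nom_swap; assumption.
  - intros a m Hm. apply (nom_perm (m ++ [a])); [apply Permutation_sym, Permutation_cons_append|].
    now apply nom_weaken_last.
  - intros a m Hm. apply (nom_perm (m ++ [a])); [apply Permutation_sym, Permutation_cons_append|].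
    apply (nom_cut _ _ a _ (nom_assum _ m a)), (nom_perm (a :: a :: m)); [|exact Hm].
    rewrite <- app_assoc. exact (Permutation_app_comm [a; a] m).
Qed.

Lemma nom_hyp l a : In a l -> NOM_exch l a.
Proof. intros Hin; apply (nom_weaken [a]); [now intros x [<-|[]]|apply (nom_assum true [] a)]. Qed.

Lemma nom_cut_cons D A B : NOM_exch D A -> NOM_exch (A :: D) B -> NOM_exch D B.
Proof. intros HA HB; apply (nom_cut _ _ _ _ HA); revert HB; apply nom_weaken; solve_incl. Qed.

Lemma nom_impI_cons D A B : NOM_exch (A :: D) B -> NOM_exch D (Imp A B).
Proof. intros HB; apply nom_impI; revert HB; apply nom_weaken; solve_incl. Qed.

Lemma nom_mp D A B : NOM_exch D (Imp A B) -> NOM_exch D A -> NOM_exch D B.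
Proof. intros HAB HA; apply (nom_cut _ _ _ _ HA), nom_impE, HAB. Qed.

Lemma nom_explosion D A B : NOM_exch D A -> NOM_exch D (Neg A) -> NOM_exch D B.
Proof. intros HA HnA; apply (nom_cut _ _ _ _ HA), nom_explo, HnA. Qed.

Definition inconsistent (D : list form) : Prop := forall B, NOM_exch D B.

Lemma inconsistent_weaken l l' : incl l l' -> inconsistent l -> inconsistent l'.
Proof. intros Hincl Hl B; exact (nom_weaken _ _ _ Hincl (Hl B)). Qed.

Lemma inconsistent_refuted D A : NOM_exch D A -> In (Neg A) D -> inconsistent D.
Proof. intros HA HnA B; exact (nom_explosion _ _ _ HA (nom_hyp _ _ HnA)). Qed.

Lemma inconsistent_cut D A l :
  NOM_exch D A -> incl l (A :: D) -> inconsistent l -> inconsistent D.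
Proof. intros HA Hincl Hl B; exact (nom_cut_cons _ _ _ HA (nom_weaken _ _ _ Hincl (Hl B))). Qed.

Lemma nom_by_contradiction D A l :
  incl l (Neg A :: D) -> inconsistent l -> NOM_exch D A.
Proof.
  intros Hincl Hl. apply (nom_em _ _ A); [apply nom_assum|].
  apply (nom_weaken l); [apply (incl_tran Hincl); solve_incl|apply Hl].
Qed.

Lemma nom_double_neg D A : In (Neg (Neg A)) D -> NOM_exch D A.
Proof.
  intros Hin. apply (nom_by_contradiction D A (Neg A :: D)); [apply incl_refl|].
  apply (inconsistent_refuted _ (Neg A)); [apply nom_hyp; now left|now right].
Qed.

Lemma G1_inconsistent G T : G1 G T -> inconsistent (G ++ map Neg T).
Proof.
  induction 1 as [C|D G T _ IH|D G T _ IH|D G T _ IH|D G T _ IH|Dl C D G T _ IH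
                 |G T C D L _ IH|Dl L C G T _ IH1 _ IH2|A B G T _ IH
                 |A B Dl L G T _ IH1 _ IH2|A B G T _ IH1 _ IH2|A B G T _ IH
                 |A B G T _ IH|A G T _ IH|A G T _ IH].
  (* thinning, contraction and interchange on either side, and ~L, only
     rearrange the set  G, ~T *)
  2-7, 15: revert IH; apply inconsistent_weaken; solve_incl.
  - apply (inconsistent_refuted _ C); [apply nom_hyp|]; solve_incl.
  - apply (inconsistent_cut _ C (C :: G ++ map Neg T)); [|solve_incl|exact IH2].
    eapply nom_by_contradiction; [|exact IH1]; solve_incl.
  - apply (inconsistent_refuted _ (Imp A B)); [|solve_incl].
    apply nom_impI_cons; eapply nom_by_contradiction; [|exact IH]; solve_incl.
  - apply (inconsistent_cut _ B (B :: G ++ map Neg T)); [|solve_incl|exact IH2].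
    apply (nom_mp _ A); [apply nom_hyp; now left|].
    eapply nom_by_contradiction; [|exact IH1]; solve_incl.
  - apply (inconsistent_refuted _ (And A B)); [|solve_incl].
    apply nom_andI; eapply nom_by_contradiction; [|exact IH1| |exact IH2]; solve_incl.
  - apply (inconsistent_cut _ A (A :: G ++ map Neg T)); [|solve_incl|exact IH].
    apply (nom_andE1 _ _ A B), nom_hyp; now left.
  - apply (inconsistent_cut _ B (B :: G ++ map Neg T)); [|solve_incl|exact IH].
    apply (nom_andE2 _ _ A B), nom_hyp; now left.
  - apply (inconsistent_cut _ A (A :: G ++ map Neg T)); [|solve_incl|exact IH].
    apply nom_double_neg; solve_incl.
Qed.

Lemma G1_nom_exch G A : G1 G [A] -> NOM_exch G A.
Proof.
  intros HA; eapply nom_by_contradiction; [|exact (G1_inconsistent _ _ HA)]; solve_incl.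
Qed.

Lemma G1_weaken l l' T : incl l l' -> G1 l T -> G1 l' T.
Proof.
  apply (closed_under_incl _ (fun l => G1 l T)).
  - intros; apply g1_interL; assumption.
  - intros; apply g1_thinL; assumption.
  - intros; apply g1_contrL; assumption.
Qed.

Lemma G1_hyp l A : In A l -> G1 l [A].
Proof. intros Hin; apply (G1_weaken [A]); [now intros x [<-|[]]|apply g1_ax]. Qed.

Lemma G1_cut_cons D A T : G1 D [A] -> G1 (A :: D) T -> G1 D T.
Proof.
  intros HA HT. apply (G1_weaken (D ++ D)); [solve_incl|].
  exact (g1_cut D [] A D T HA HT).
Qed.

Lemma G1_mp D A B : G1 D [Imp A B] -> G1 D [A] -> G1 D [B].
Proof.
  intros HAB HA. apply (G1_cut_cons _ _ _ HAB), (G1_cut_cons _ A).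
  - revert HA; apply G1_weaken; solve_incl.
  - apply (G1_weaken [Imp A B; A]); [solve_incl|].
    exact (g1_impL A B [A] [] [] [B] (g1_ax A) (g1_ax B)).
Qed.

Lemma G1_impI D A B : G1 (A :: D) [B] -> G1 D [Imp A B].
Proof. exact (g1_impR A B D []). Qed.

Lemma G1_andI D A B : G1 D [A] -> G1 D [B] -> G1 D [And A B].
Proof. exact (g1_andR A B D []). Qed.

Lemma G1_negI D A : G1 (A :: D) [] -> G1 D [Neg A].
Proof. exact (g1_negR A D []). Qed.

Lemma G1_contra D A : G1 D [A] -> G1 D [Neg A] -> G1 D [].
Proof. intros HA HnA; exact (G1_cut_cons _ _ _ HnA (g1_negL A D [] HA)). Qed.

Lemma H_G1 A : H A -> G1 [] [A].
Proof.
  induction 1 as [A B|A B C|A B _ IHA _ IHAB|A B|A B|A B|A B|A].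
  - apply G1_impI, G1_impI, G1_hyp; simpl; auto.
  - apply G1_impI, G1_impI, G1_impI.
    apply (G1_mp _ B); [apply (G1_mp _ A)|apply (G1_mp _ A)]; apply G1_hyp; simpl; auto.
  - exact (G1_mp _ _ _ IHAB IHA).
  - apply G1_impI, G1_impI, G1_andI; apply G1_hyp; simpl; auto.
  - apply G1_impI, g1_andL1, g1_ax.
  - apply G1_impI, g1_andL2, g1_ax.
  - apply G1_impI, G1_impI, G1_negI, (G1_contra _ B);
      apply (G1_mp _ A); apply G1_hyp; simpl; auto.
  - apply G1_impI, (g1_negL (Neg A) [] [A]), (g1_negR A [] [A]), g1_ax.
Qed.

Lemma hd_G1 D A : Hderiv D A -> G1 D [A].
Proof.
  induction 1 as [A Hin|A Hax|A B _ IHA _ IHAB].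
  - exact (G1_hyp _ _ Hin).
  - apply (G1_weaken []); [intros x []|exact (H_G1 _ Hax)].
  - exact (G1_mp _ _ _ IHAB IHA).
Qed.

Theorem theorem3p2 (Gamma : list form) (psi0 : form) :
  (NOM_exch Gamma psi0 <-> G1 Gamma [psi0]) /\
  (G1 Gamma [psi0] <-> H (seq_formula Gamma psi0)).
Proof.
  split; split; intros Hder.
  - exact (hd_G1 _ _ (nom_exch_hd _ _ Hder)).
  - exact (G1_nom_exch _ _ Hder).
  - exact (proj1 (hd_seq_formula _ _) (nom_exch_hd _ _ (G1_nom_exch _ _ Hder))).
  - exact (hd_G1 _ _ (proj2 (hd_seq_formula _ _) Hder)).
Qed.
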